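(* Let $X$ be an irreducible affine variety and $\mathcal E\subset\operatorname{End}(X)$ a linear semigroup. The following are equivalent: (i) $\mathcal E$ has a dense orbit in $X$; (ii) $d(X)=\dim X$; (iii) there exists $x\in X$ with $\mathcal E(x)=X$; (iv) $\mathcal E(x)=X$ for all $x$ in an open dense subset of $X$. If these hold, then $X$ is a vector space (isomorphic to an affine space).
   Context: $\Bbbk$ is algebraically closed of characteristic $0$. $\operatorname{End}(X)$ is the semigroup of morphisms $X\to X$. A semi-subgroup $\mathcal E\subset\operatorname{End}(X)$ (closed under composition, containing $\mathrm{id}_X$) is a linear semigroup if there is a closed embedding $X\hookrightarrow V$ into a finite-dimensional vector space such that the image of $\mathcal E$ in $\operatorname{Mor}(X,V)$ is a linear subspace. $\mathcal E(x)=\{\phi(x)\mid\phi\in\mathcal E\}$ is the orbit of $x$; $d(X)=\max_{x\in X}\dim\overline{\mathcal E(x)}$. *)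

(* Affine varieties are modelled as
   Zariski-closed subsets of k^n, points are row vectors 'rV[k]_n. *)
From HB Require Import structures.
From mathcomp Require Import all_boot all_order all_algebra.
From mathcomp Require Import mpoly.
Set Implicit Arguments. Unset Strict Implicit. Unset Printing Implicit Defensive.
Import GRing.Theory.
Local Open Scope ring_scope.

Section AffGeom.
Variable k : closedFieldType.

Definition pt (n : nat) := 'rV[k]_n.

Definition evalp n (p : {mpoly k[n]}) (x : pt n) : k := p.@[fun i => x 0 i].

Definition zero_set n (S : {mpoly k[n]} -> Prop) : pt n -> Prop :=
  fun x => forall p, S p -> evalp p x = 0.

Definition zclosed n (A : pt n -> Prop) : Prop :=
  exists S : {mpoly k[n]} -> Prop, forall x, A x <-> zero_set S x.

Definition zclosure n (A : pt n -> Prop) : pt n -> Prop :=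
  fun x => forall p : {mpoly k[n]}, (forall y, A y -> evalp p y = 0) -> evalp p x = 0.

Definition dense_in n (A X : pt n -> Prop) : Prop :=
  forall x, X x -> zclosure A x.

Definition subset_of n (A B : pt n -> Prop) : Prop := forall x, A x -> B x.

Definition zirreducible n (X : pt n -> Prop) : Prop :=
  (exists x, X x) /\
  forall Z1 Z2 : pt n -> Prop, zclosed Z1 -> zclosed Z2 ->
    (forall x, X x -> Z1 x \/ Z2 x) ->
    subset_of X Z1 \/ subset_of X Z2.

Definition has_chain n (X : pt n -> Prop) (d : nat) : Prop :=
  exists Z : nat -> pt n -> Prop,
    (forall i, (i <= d)%N -> zclosed (Z i) /\ zirreducible (Z i)) /\
    (forall i, (i < d)%N -> subset_of (Z i) (Z i.+1) /\ ~ subset_of (Z i.+1) (Z i)) /\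
    subset_of (Z d) X.

Definition is_dim n (X : pt n -> Prop) (d : nat) : Prop :=
  has_chain X d /\ ~ has_chain X d.+1.

Definition polymap n m (P : 'I_m -> {mpoly k[n]}) (x : pt n) : pt m :=
  \row_i evalp (P i) x.

Definition is_morph n m (X : pt n -> Prop) (f : pt n -> pt m) : Prop :=
  exists P : 'I_m -> {mpoly k[n]}, forall x, X x -> f x = polymap P x.

Definition is_endo n (X : pt n -> Prop) (f : pt n -> pt n) : Prop :=
  is_morph X f /\ forall x, X x -> X (f x).

(* E is a semi-subgroup of End(X); maps are identified when equal on X *)
Definition endo_semigroup n (X : pt n -> Prop) (E : (pt n -> pt n) -> Prop) : Prop :=
  (forall f, E f -> is_endo X f) /\
  (exists f, E f /\ forall x, X x -> f x = x) /\
  (forall f g, E f -> E g -> exists h, E h /\ forall x, X x -> h x = f (g x)).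

Definition closed_embedding n m (X : pt n -> Prop) (iota : pt n -> pt m) : Prop :=
  is_morph X iota /\
  zclosed (fun y => exists x, X x /\ y = iota x) /\
  exists Q : 'I_n -> {mpoly k[m]}, forall x, X x -> polymap Q (iota x) = x.

(* linear semigroup: for some closed embedding X -> V = k^m, the image
   {iota \o f | f in E} is a linear subspace of Mor(X, V) *)
Definition linear_semigroup n (X : pt n -> Prop) (E : (pt n -> pt n) -> Prop) : Prop :=
  endo_semigroup X E /\
  exists (m : nat) (iota : pt n -> pt m),
    closed_embedding X iota /\
    forall (f g : pt n -> pt n) (a : k), E f -> E g ->
      exists h, E h /\ forall x, X x -> iota (h x) = a *: iota (f x) + iota (g x).

Definition Eorbit n (E : (pt n -> pt n) -> Prop) (x : pt n) : pt n -> Prop :=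
  fun y => exists f, E f /\ y = f x.

Definition is_dX n (X : pt n -> Prop) (E : (pt n -> pt n) -> Prop) (d : nat) : Prop :=
  (exists x, X x /\ is_dim (zclosure (Eorbit E x)) d) /\
  (forall x e, X x -> is_dim (zclosure (Eorbit E x)) e -> (e <= d)%N).

End AffGeom.

(* Since E is linear, the image under the embedding iota : X -> V of an orbit
   E(x) is a linear subspace S_x of V; in particular it is closed, so a dense
   orbit is all of X, and then iota identifies X with the vector space S_x,
   the inverse being polynomial.  If iota(F_1 x), ..., iota(F_r x) is a basis
   of S_x = iota(X), the y at which iota(F_1 y), ..., iota(F_r y) remain
   independent form the complement of a hypersurface, and for them S_y is
   again iota(X).  Comparing dimensions needs dim k^r = r for the Krull
   dimension: coordinate subspaces give a chain of length r, and along a strict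
   inclusion Z < Z' of irreducible closed sets a family of coordinates that is
   algebraically independent on Z gains one more independent coordinate on Z'.
   Conversely, an orbit closure of dimension dim X inside the irreducible X is
   all of X, since otherwise X would lengthen a maximal chain. *)

From HB Require Import structures.
From mathcomp Require Import all_boot all_order all_algebra.
From mathcomp Require Import mpoly.
From mathcomp Require Import boolp classical_sets functions.
From mathcomp Require Import ring.
Import GRing.Theory.
Local Open Scope ring_scope.
Set Implicit Arguments. Unset Strict Implicit. Unset Printing Implicit Defensive.

Section Evaluation.
Variable k : closedFieldType.
Implicit Types n m : nat.

Lemma evalpM n (p q : {mpoly k[n]}) x : evalp (p * q) x = evalp p x * evalp q x.
Proof. exact: mevalM. Qed.

Lemma evalp1 n (x : pt k n) : evalp (1 : {mpoly k[n]}) x = 1.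
Proof. exact: meval1. Qed.

Lemma evalp0 n (x : pt k n) : evalp (0 : {mpoly k[n]}) x = 0.
Proof. exact: meval0. Qed.

Lemma evalpXU n i (x : pt k n) : evalp ('X_i : {mpoly k[n]}) x = x 0 i.
Proof. exact: mevalXU. Qed.

Lemma evalpZ n c (p : {mpoly k[n]}) x : evalp (c *: p) x = c * evalp p x.
Proof. exact: mevalZ. Qed.

Lemma evalp_sum n (I : Type) (r : seq I) (P : pred I) (F : I -> {mpoly k[n]}) x :
  evalp (\sum_(i <- r | P i) F i) x = \sum_(i <- r | P i) evalp (F i) x.
Proof. exact: raddf_sum. Qed.

Definition polytuple n m (P : 'I_m -> {mpoly k[n]}) : m.-tuple {mpoly k[n]} :=
  [tuple P i | i < m].

Lemma evalp_comp n m (p : {mpoly k[m]}) (P : 'I_m -> {mpoly k[n]}) x :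
  evalp (p \mPo polytuple P) x = evalp p (polymap P x).
Proof.
rewrite /evalp comp_mpoly_meval; apply: meval_eq => i.
by rewrite tnth_mktuple /polymap mxE.
Qed.

Lemma polymap_comp n m l (P : 'I_m -> {mpoly k[n]}) (Q : 'I_l -> {mpoly k[m]}) x :
  polymap Q (polymap P x) = polymap (fun i => Q i \mPo polytuple P) x.
Proof. by apply/rowP => i; rewrite /polymap !mxE evalp_comp. Qed.

Lemma polymap_coords n (x : pt k n) : polymap (fun i => 'X_i) x = x.
Proof. by apply/rowP => i; rewrite /polymap mxE evalpXU. Qed.

Lemma polymap_mulmx n m p (P : 'I_m -> {mpoly k[n]}) (M : 'M[k]_(m, p)) x :
  polymap P x *m M = polymap (fun j => \sum_l M l j *: P l) x.
Proof.
apply/rowP => j; rewrite /polymap !mxE evalp_sum; apply: eq_bigr => l _.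
by rewrite evalpZ mxE mulrC.
Qed.

End Evaluation.

Section ZariskiClosed.
Variables (k : closedFieldType) (n : nat).
Implicit Types A B X Y Z : pt k n -> Prop.

Lemma zclosure_closed A : zclosed (zclosure A).
Proof. by exists (fun p => forall y, A y -> evalp p y = 0). Qed.

Lemma sub_zclosure A : subset_of A (zclosure A).
Proof. by move=> x Ax p; apply. Qed.

Lemma zclosure_min A X : zclosed X -> subset_of A X -> subset_of (zclosure A) X.
Proof.
move=> [S HS] AX x Hx; apply/HS => p Sp; apply: Hx => y /AX /HS; exact.
Qed.

Lemma zclosed_ext A B : (forall x, A x <-> B x) -> zclosed A -> zclosed B.
Proof. by move=> AB [S HS]; exists S => x; rewrite -AB. Qed.

Lemma zclosedT : zclosed (fun _ : pt k n => True).
Proof. by exists (fun p => p = 0) => x; split => // _ p ->; apply: evalp0. Qed.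

Lemma zclosedI A B : zclosed A -> zclosed B -> zclosed (fun x => A x /\ B x).
Proof.
move=> [SA HA] [SB HB]; exists (fun p => SA p \/ SB p) => x; split.
  by case=> /HA Ha /HB Hb p [/Ha|/Hb].
by move=> H; split; [apply/HA | apply/HB] => p Sp; apply: H; [left | right].
Qed.

Lemma zclosed_preimage m (P : 'I_m -> {mpoly k[n]}) (W : pt k m -> Prop) :
  zclosed W -> zclosed (fun x => W (polymap P x)).
Proof.
move=> [S HS]; exists (fun p => exists2 q, S q & p = q \mPo polytuple P) => x.
split; first by move/HS => H p [q Sq ->]; rewrite evalp_comp; apply: H.
by move=> H; apply/HS => q Sq; rewrite -evalp_comp; apply: H; exists q.
Qed.

Lemma zclosed_zero_set (S : {mpoly k[n]} -> Prop) : zclosed (zero_set S).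
Proof. by exists S. Qed.

Lemma not_subset_of A B : ~ subset_of A B -> exists x, A x /\ ~ B x.
Proof.
move=> nAB; apply: contrapT => nex; apply: nAB => x Ax.
by apply: contrapT => nBx; apply: nex; exists x.
Qed.

Lemma not_zero_set (S : {mpoly k[n]} -> Prop) x :
  ~ zero_set S x -> exists p, S p /\ evalp p x != 0.
Proof.
move=> nZx; apply: contrapT => nex; apply: nZx => p Sp.
by apply/eqP; apply: contrapT => /negP px; apply: nex; exists p.
Qed.

Lemma zirreducible_compl_dense X Z : zirreducible X -> zclosed Z ->
  (exists x, X x /\ ~ Z x) -> dense_in (fun x => X x /\ ~ Z x) X.
Proof.
move=> [_ X_irr] Zc [x0 [Xx0 nZx0]] x Xx.
have cover y : X y -> Z y \/ zclosure (fun x => X x /\ ~ Z x) y.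
  by move=> Xy; case: (pselect (Z y)) => [|nZy]; [left | right; apply: sub_zclosure].
have [XZ|] := X_irr _ _ Zc (zclosure_closed _) cover; last by apply.
by case: nZx0; apply: XZ.
Qed.

End ZariskiClosed.

Section Chains.
Variables (k : closedFieldType) (n : nat).
Implicit Types A X Y : pt k n -> Prop.

Lemma chain_subset d (Z : nat -> pt k n -> Prop) :
  (forall i, (i < d)%N -> subset_of (Z i) (Z i.+1)) ->
  forall i j, (i <= j <= d)%N -> subset_of (Z i) (Z j).
Proof.
move=> ZS i; elim=> [|j IH]; first by rewrite leqn0 => /andP[/eqP -> _] x.
rewrite leq_eqVlt => /andP[/orP[/eqP -> _ x // | ij] jd] x Zx.
by apply: (ZS j jd); apply: IH Zx; rewrite -ltnS ij ltnW.
Qed.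

Lemma has_chain_leq X d e : has_chain X d -> (e <= d)%N -> has_chain X e.
Proof.
move=> [Z [Zirr [Zlt ZX]]] ed; exists Z; split; [|split].
- by move=> i ie; apply: Zirr; apply: leq_trans ed.
- by move=> i ie; apply: Zlt; apply: leq_trans ed.
- move=> x Zx; apply: ZX; apply: (chain_subset (d := d)) Zx.
    by move=> i /Zlt[].
  by rewrite ed leqnn.
Qed.

Lemma has_chain_subset X Y d : subset_of X Y -> has_chain X d -> has_chain Y d.
Proof.
by move=> XY [Z [Zirr [Zlt ZX]]]; exists Z; do 2!split => //; move=> x /ZX/XY.
Qed.

Lemma is_dim_ext X Y d : (forall x, X x <-> Y x) -> is_dim X d -> is_dim Y d.
Proof.
move=> XY [chX nchX]; split; first by apply: has_chain_subset chX => x /XY.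
by move=> chY; apply: nchX; apply: has_chain_subset chY => x /XY.
Qed.

Lemma has_chain_extend X Y d : zclosed X -> zirreducible X ->
  subset_of Y X -> ~ subset_of X Y -> has_chain Y d -> has_chain X d.+1.
Proof.
move=> Xc Xirr YX nXY [Z [Zirr [Zlt ZY]]].
exists (fun i => if (i <= d)%N then Z i else X); split; [|split].
- by move=> i _; case: ifP => [/Zirr|].
- move=> i; rewrite ltnS => id; case: (ltngtP i d) id => // [ilt|->] _.
    exact: Zlt.
  split=> [x /ZY /YX //|XZ].
  by apply: nXY => x /XZ /ZY.
- by rewrite ltnn.
Qed.

End Chains.

Section Transport.
Variables (k : closedFieldType) (n m : nat).
Variables (A : pt k n -> Prop) (B : pt k m -> Prop).
Variables (phi : pt k n -> pt k m) (psi : pt k m -> pt k n).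
Hypotheses (B_closed : zclosed B) (phi_morph : is_morph A phi)
  (psi_morph : is_morph B psi).
Hypotheses (phiA : forall a, A a -> B (phi a)) (psiB : forall b, B b -> A (psi b)).
Hypotheses (psiK : forall a, A a -> psi (phi a) = a)
  (phiK : forall b, B b -> phi (psi b) = b).

Definition transport (Z : pt k n -> Prop) (b : pt k m) := B b /\ Z (psi b).

Lemma transport_subset Z Z' : subset_of Z A ->
  subset_of Z Z' <-> subset_of (transport Z) (transport Z').
Proof.
move=> ZA; split=> [ZZ' b [Bb /ZZ' Zb] // | ZZ' a Za].
have Aa := ZA a Za.
by have [_] := ZZ' (phi a) (conj (phiA Aa) (eq_ind_r Z Za (psiK Aa))); rewrite psiK.
Qed.

Lemma transport_closed Z : zclosed Z -> zclosed (transport Z).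
Proof.
move: psi_morph => [P HP] Zc.
apply: (@zclosed_ext _ _ (fun b => B b /\ Z (polymap P b))).
  by move=> b; rewrite /transport; split=> -[Bb]; rewrite HP // => Zb; split.
by apply: zclosedI => //; apply: zclosed_preimage.
Qed.

Lemma transport_irreducible Z : subset_of Z A -> zirreducible Z ->
  zirreducible (transport Z).
Proof.
move: phi_morph => [P HP] ZA [[z Zz] Zirr]; split.
  by have Az := ZA _ Zz; exists (phi z); split; [apply: phiA | rewrite psiK].
move=> W1 W2 W1c W2c W12.
have cover a : Z a -> W1 (polymap P a) \/ W2 (polymap P a).
  move=> Za; have Aa := ZA _ Za; rewrite -HP //; apply: W12.
  by split; [apply: phiA | rewrite psiK].
have back W b : subset_of Z (fun a => W (polymap P a)) -> transport Z b -> W b.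
  by move=> ZW [Bb /ZW]; rewrite -HP ?phiK //; apply: psiB.
have [ZW|ZW] := Zirr _ _ (zclosed_preimage P W1c) (zclosed_preimage P W2c) cover.
  by left => b; apply: back.
by right => b; apply: back.
Qed.

Lemma has_chain_transport d : has_chain A d -> has_chain B d.
Proof.
move=> [Z [Zirr [Zlt ZA]]].
have ZiA i : (i <= d)%N -> subset_of (Z i) A.
  move=> id x Zx; apply: ZA; apply: (chain_subset (d := d)) Zx.
    by move=> j /Zlt[].
  by rewrite id leqnn.
exists (fun i => transport (Z i)); split; [|split].
- move=> i id; have [Zc Zi] := Zirr i id.
  by split; [apply: transport_closed | apply: transport_irreducible; first exact: ZiA].
- move=> i id; have Ai := ZiA i (ltnW id); have Ai1 := ZiA i.+1 id.
  by rewrite -!transport_subset //; apply: Zlt.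
- by move=> b [].
Qed.

End Transport.

Section LastVariable.
Variable R : comNzRingType.
Local Notation widen := (widen_ord (leqnSn _)).

Definition mnm_init s (m : 'X_{1..s.+1}) : 'X_{1..s} := [multinom m (widen i) | i < s].

Lemma mnm_eq_init_last s (m1 m2 : 'X_{1..s.+1}) :
  (m1 == m2) = (mnm_init m1 == mnm_init m2) && (m1 ord_max == m2 ord_max).
Proof.
apply/eqP/andP => [->|[/eqP e1 /eqP e2]] //.
apply/mnmP => i; have [j ->|->] := unliftP ord_max i => //.
have := congr1 (fun m : 'X_{1..s} => m j) e1; rewrite /mnm_init !mnmE.
by have -> : lift ord_max j = widen j by apply/val_inj; rewrite /= /bump leqNgt ltn_ord.
Qed.

Lemma coef_muni s (p : {mpoly R[s.+1]}) (m : 'X_{1..s.+1}) :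
  ((muni p)`_(m ord_max))@_(mnm_init m) = p@_m.
Proof.
rewrite [in RHS](mpolyE p) muniE coef_sum !raddf_sum /=; apply: eq_bigr => m' _.
rewrite coefZ coefXn mcoeffZ mcoeffX mnm_eq_init_last.
case: (m ord_max =P m' ord_max) => [->|ne].
  by rewrite eqxx mulr1 andbT mcoeffZ mcoeffX.
have /negbTE-> : m' ord_max != m ord_max by apply/eqP => e; apply: ne.
by rewrite mulr0 mcoeff0 andbF mulr0.
Qed.

Lemma muni_eq0 s (p : {mpoly R[s.+1]}) : (muni p == 0) = (p == 0).
Proof.
apply/eqP/eqP => [p0|->]; last exact: raddf0.
by apply/mpolyP => m; rewrite -coef_muni p0 coef0 !mcoeff0.
Qed.

Lemma meval_muni s (p : {mpoly R[s.+1]}) (v : 'I_s.+1 -> R) :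
  p.@[v] = (map_poly (meval (fun i => v (widen i))) (muni p)).[v ord_max].
Proof.
rewrite muniE mevalE raddf_sum horner_sum /=; apply: eq_bigr => m _.
rewrite map_polyZ hornerZ map_polyXn hornerXn /= mevalZ mevalX.
rewrite big_ord_recr /= mulrA; congr (_ * _ * _).
by apply: eq_bigr => i _; rewrite mnmE.
Qed.

End LastVariable.

Section Nonvanishing.
Variable k : closedFieldType.
Local Notation widen := (widen_ord (leqnSn _)).

Lemma mpoly_nonvanishing s (p : {mpoly k[s]}) : p != 0 -> exists v, p.@[v] != 0.
Proof.
elim: s p => [|s IH] p pn0.
  exists (fun _ => 0); rewrite (nvar0_mpolyC p) mevalC.
  by move: pn0; rewrite {1}(nvar0_mpolyC p) mpolyC_eq0.
have [v lc_v] : exists v, (lead_coef (muni p)).@[v] != 0.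
  by apply: IH; rewrite lead_coef_eq0 muni_eq0.
have /closed_nonrootP[t pt] : map_poly (meval v) (muni p) != 0.
  by rewrite -size_poly_eq0 size_map_poly_id0 // size_poly_eq0 muni_eq0.
pose w (i : 'I_s.+1) := if insub (val i) is Some j then v j else t.
exists w; rewrite meval_muni.
have -> : w ord_max = t by rewrite /w insubF //= ltnn.
suff -> : meval (fun i => w (widen i)) = meval v by [].
apply/funext => q; apply: meval_eq => i; rewrite /w insubT ?ltn_ord //= => Hi.
by congr v; apply: val_inj.
Qed.

Lemma vanishing_mpoly_eq0 n (p : {mpoly k[n]}) : (forall x, evalp p x = 0) -> p = 0.
Proof.
move=> p0; apply/eqP; apply: contraT => /mpoly_nonvanishing[v].
rewrite -(p0 (\row_i v i)) /evalp.
by under [X in _ != X]meval_eq do rewrite mxE; rewrite eqxx.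
Qed.

End Nonvanishing.

Section IntegralScaling.
Variables (R : idomainType) (K : comNzRingType) (f : {rmorphism R -> K}).

Definition algebraic_over (u : K) :=
  exists2 P : {poly R}, P != 0 & root (map_poly f P) u.

Lemma integral_exp u n : integralOver f u -> integralOver f (u ^+ n).
Proof.
move=> fu; elim: n => [|n IH]; first by rewrite expr0; apply: integral1.
by rewrite exprS; apply: integral_mul.
Qed.

(* If P(u) = 0 with P of degree d + 1 and leading coefficient c, then c u is a
   root of the monic polynomial c^d P(X / c). *)
Lemma integral_lead_coef_mul (P : {poly R}) u :
  root (map_poly f P) u -> integralOver f (f (lead_coef P) * u).
Proof.
move=> /eqP Pu; set c := lead_coef P.
have [sP1|] := leqP (size P) 1.
  move: Pu; rewrite /c (size1_polyC sP1) lead_coefC map_polyC hornerC => ->.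
  by rewrite mul0r; apply: integral0.
case sP: (size P) => [//|[//|d]] _.
have cE : P`_d.+1 = c by rewrite /c /lead_coef sP.
pose Q := \poly_(i < d.+2) (if i == d.+1 then 1 else P`_i * c ^+ (d - i)).
exists Q.
  rewrite monicE /lead_coef size_poly_eq /= ?eqxx ?oner_eq0 //.
  by rewrite coef_poly ltnSn eqxx.
have size_le p : (size (map_poly f p) <= size p)%N by apply: size_poly.
have sQ : (size (map_poly f Q) <= d.+2)%N.
  exact: leq_trans (size_le _) (size_poly _ _).
have sfP : (size (map_poly f P) <= d.+2)%N by rewrite -sP size_le.
apply/eqP; transitivity (f c ^+ d * (map_poly f P).[u]); last by rewrite Pu mulr0.
rewrite (horner_coef_wide _ sQ) (horner_coef_wide _ sfP) mulr_sumr.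
apply: eq_bigr => i _.
rewrite !coef_map /= coef_poly ltn_ord; case: eqP => [->|ne].
  by rewrite rmorph1 mul1r cE exprMn exprS; ring.
have id : (i <= d)%N by have := ltn_ord i; rewrite ltnS leq_eqVlt => /orP[/eqP/ne|].
have -> : f c ^+ d = f c ^+ (d - i) * f c ^+ i by rewrite -exprD subnK.
by rewrite rmorphM rmorphXn exprMn; ring.
Qed.

Lemma integral_scale_algebraic a u :
  a != 0 -> integralOver f (f a * u) -> algebraic_over u.
Proof.
move=> a0 [G Gmon Groot]; exists (G \Po (a *: 'X)).
  rewrite -size_poly_eq0 size_comp_poly2 ?size_poly_eq0 ?monic_neq0 //.
  by rewrite size_scale ?size_polyX.
by rewrite map_comp_poly /root horner_comp map_polyZ map_polyX hornerZ hornerX.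
Qed.

End IntegralScaling.

Section AlgebraicMpoly.
Variables (k : idomainType) (r s : nat) (K : comNzRingType).
Variables (f : {rmorphism {mpoly k[s]} -> K}) (g : {rmorphism {mpoly k[r]} -> K}).
Hypothesis fgC : forall a : k, g a%:MP = f a%:MP.

Lemma integral_scale_mpoly c : (forall j, integralOver f (f c * g 'X_j)) ->
  forall q, exists N, integralOver f (f c ^+ N * g q).
Proof.
move=> intX; elim/mpolyind => [|a m p _ _ [N intp]].
  by exists 0%N; rewrite rmorph0 mulr0; apply: integral0.
exists (N + mdeg m)%N; rewrite rmorphD mulrDr; apply: integral_add; last first.
  rewrite exprD mulrAC; apply: integral_mul => //.
  by apply: integral_exp; apply: integral_id.
rewrite exprD -mulrA -mul_mpolyC rmorphM fgC mpolyXE_id rmorph_prod mdegE -prodrXr.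
apply: integral_mul; first by apply: integral_exp; apply: integral_id.
rewrite mulrCA -big_split /=; apply: integral_mul; first exact: integral_id.
apply: (big_ind (integralOver f)); [exact: integral1 | exact: integral_mul |].
by move=> i _; rewrite rmorphXn -exprMn; apply: integral_exp; apply: intX.
Qed.

(* The product c of the leading coefficients of relations for the generators
   makes every c x_j integral, hence c^N q integral for each q. *)
Lemma algebraic_mpoly : (forall j, algebraic_over f (g 'X_j)) ->
  forall q, algebraic_over f (g q).
Proof.
move=> algX; have [P HP] : {P : 'I_r -> {poly {mpoly k[s]}} &
    forall j, P j != 0 /\ root (map_poly f (P j)) (g 'X_j)}.
  apply: (@choice _ _ (fun j P => P != 0 /\ root (map_poly f P) (g 'X_j))) => j.
  by have [P] := algX j; exists P.
pose c := \prod_(j < r) lead_coef (P j).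
have c0 : c != 0 by apply/prodf_neq0 => j _; rewrite lead_coef_eq0; case: (HP j).
have intX j : integralOver f (f c * g 'X_j).
  rewrite /c (bigD1 j) //= rmorphM mulrAC; apply: integral_mul; last exact: integral_id.
  by apply: integral_lead_coef_mul; case: (HP j).
move=> q; have [N intq] := integral_scale_mpoly intX q.
by apply: (integral_scale_algebraic (a := c ^+ N)); rewrite ?expf_neq0 ?rmorphXn.
Qed.

End AlgebraicMpoly.

Section CoordinateIndependence.
Variables (k : closedFieldType) (r : nat).
Implicit Types (Z : pt k r -> Prop) (s : nat).

Definition sub_coords s (sg : 'I_s -> 'I_r) (x : pt k r) (i : 'I_s) : k := x 0 (sg i).

Definition coords_indep Z s (sg : 'I_s -> 'I_r) :=
  forall p : {mpoly k[s]}, (forall z, Z z -> p.@[sub_coords sg z] = 0) -> p = 0.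

Definition coords_algebraic Z s (sg : 'I_s -> 'I_r) (q : {mpoly k[r]}) :=
  exists2 P : {poly {mpoly k[s]}}, P != 0 &
    forall z, Z z -> (map_poly (meval (sub_coords sg z)) P).[evalp q z] = 0.

(* The coordinate ring of Z is modelled inside the ring of all functions
   Z -> k (which needs a point of Z): [restr q] is the function induced by q,
   [restr_sub p] the one induced by p(x_sg). *)
Section FunctionRing.
Variables (Z : pt k r -> Prop) (z0 : pt k r) (Zz0 : Z z0) (s : nat) (sg : 'I_s -> 'I_r).

Definition Zpt := {z : pt k r | Z z}.
HB.instance Definition _ := gen_eqMixin Zpt.
HB.instance Definition _ := gen_choiceMixin Zpt.
HB.instance Definition _ := isPointed.Build Zpt (exist _ z0 Zz0).

Definition restr (q : {mpoly k[r]}) : Zpt -> k := fun z => evalp q (sval z).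
Definition restr_sub (p : {mpoly k[s]}) : Zpt -> k :=
  fun z => p.@[sub_coords sg (sval z)].
Definition eval_at (z : Zpt) (h : Zpt -> k) : k := h z.

Lemma restr_is_zmod_morphism : zmod_morphism restr.
Proof. by move=> p q; apply/funext => z; apply: mevalB. Qed.
Lemma restr_is_monoid_morphism : monoid_morphism restr.
Proof. by split=> [|p q]; apply/funext => z; [apply: meval1 | apply: mevalM]. Qed.
HB.instance Definition _ := GRing.isZmodMorphism.Build _ _ restr restr_is_zmod_morphism.
HB.instance Definition _ :=
  GRing.isMonoidMorphism.Build _ _ restr restr_is_monoid_morphism.

Lemma restr_sub_is_zmod_morphism : zmod_morphism restr_sub.
Proof. by move=> p q; apply/funext => z; apply: mevalB. Qed.
Lemma restr_sub_is_monoid_morphism : monoid_morphism restr_sub.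
Proof. by split=> [|p q]; apply/funext => z; [apply: meval1 | apply: mevalM]. Qed.
HB.instance Definition _ :=
  GRing.isZmodMorphism.Build _ _ restr_sub restr_sub_is_zmod_morphism.
HB.instance Definition _ :=
  GRing.isMonoidMorphism.Build _ _ restr_sub restr_sub_is_monoid_morphism.

Lemma eval_at_is_zmod_morphism z : zmod_morphism (eval_at z). Proof. by []. Qed.
Lemma eval_at_is_monoid_morphism z : monoid_morphism (eval_at z). Proof. by []. Qed.
HB.instance Definition _ z :=
  GRing.isZmodMorphism.Build _ _ (eval_at z) (eval_at_is_zmod_morphism z).
HB.instance Definition _ z :=
  GRing.isMonoidMorphism.Build _ _ (eval_at z) (eval_at_is_monoid_morphism z).

Lemma horner_restr (P : {poly {mpoly k[s]}}) q (z : Zpt) :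
  (map_poly restr_sub P).[restr q] z =
  (map_poly (meval (sub_coords sg (sval z))) P).[evalp q (sval z)].
Proof.
rewrite -[LHS]/(eval_at z _) -horner_map -map_poly_comp.
by congr (_.[_]); apply: eq_map_poly.
Qed.

Lemma coords_algebraicE q :
  coords_algebraic Z sg q <-> algebraic_over restr_sub (restr q).
Proof.
split=> -[P P0 HP]; exists P => //.
  by apply/eqP/funext => z; rewrite horner_restr; apply: HP; case: z.
by move=> z Zz; rewrite -(horner_restr P q (exist _ z Zz)) (eqP HP).
Qed.

End FunctionRing.

Lemma coords_algebraic_all Z s (sg : 'I_s -> 'I_r) : (exists z, Z z) ->
  (forall j, coords_algebraic Z sg 'X_j) -> forall q, coords_algebraic Z sg q.
Proof.
move=> [z0 Zz0] algX q; apply/(coords_algebraicE Zz0).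
apply: algebraic_mpoly => [a|j]; last exact/(coords_algebraicE Zz0).
by apply/funext => z; rewrite /= /restr /restr_sub /evalp !mevalC.
Qed.

End CoordinateIndependence.

Section KrullUpperBound.
Variables (k : closedFieldType) (r : nat).
Implicit Types (Z : pt k r -> Prop) (s : nat).

Lemma coords_indep_leq Z s (sg : 'I_s -> 'I_r) : coords_indep Z sg -> (s <= r)%N.
Proof.
move=> indep; suff /leq_card : injective sg by rewrite !card_ord.
move=> i j eij; apply/eqP; apply: contraT => nij.
have : ('X_i - 'X_j : {mpoly k[s]}) = 0.
  by apply: indep => z _; rewrite mevalB !mevalXU /sub_coords eij subrr.
move/(congr1 (mcoeff U_(i))); rewrite mcoeffB !mcoeffXU eqxx eq_sym (negbTE nij).
by rewrite subr0 mcoeff0 => /eqP; rewrite oner_eq0.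
Qed.

Lemma coords_indep0 Z (sg : 'I_0 -> 'I_r) : (exists z, Z z) -> coords_indep Z sg.
Proof.
move=> [z Zz] p /(_ z Zz); rewrite (nvar0_mpolyC p) mevalC => ->.
by rewrite raddf0.
Qed.

Lemma coords_indep_subset Z Z' s (sg : 'I_s -> 'I_r) :
  subset_of Z Z' -> coords_indep Z sg -> coords_indep Z' sg.
Proof. by move=> ZZ' indep p H; apply: indep => z /ZZ'; apply: H. Qed.

Definition extend_coords s (sg : 'I_s -> 'I_r) (j : 'I_r) (i : 'I_s.+1) : 'I_r :=
  if insub (val i) is Some i' then sg i' else j.

Lemma coords_indep_extend Z s (sg : 'I_s -> 'I_r) j :
  coords_indep Z sg -> ~ coords_algebraic Z sg 'X_j ->
  coords_indep Z (extend_coords sg j).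
Proof.
move=> indep nalg p H; apply/eqP; rewrite -muni_eq0; apply: contraT => pn0.
case: nalg; exists (muni p) => // z Zz.
rewrite -(H z Zz) meval_muni evalpXU /sub_coords /extend_coords insubF ?ltnn //=.
congr (_.[_]); apply: eq_map_poly => q; apply: meval_eq => i.
rewrite insubT ?ltn_ord //= => Hi.
by congr (z 0 (sg _)); apply: val_inj.
Qed.

Definition subst_coords s (sg : 'I_s -> 'I_r) (p : {mpoly k[s]}) : {mpoly k[r]} :=
  p \mPo polytuple (fun i => 'X_(sg i)).

Lemma evalp_horner_subst s (sg : 'I_s -> 'I_r) (P : {poly {mpoly k[s]}}) q z :
  evalp ((map_poly (subst_coords sg) P).[q]) z =
  (map_poly (meval (sub_coords sg z)) P).[evalp q z].
Proof.
rewrite /evalp -horner_map /= -map_poly_comp; congr (_.[_]).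
apply: eq_map_poly => p /=; rewrite /subst_coords comp_mpoly_meval.
by apply: meval_eq => i; rewrite tnth_mktuple mevalXU.
Qed.

(* On an irreducible Z, a relation P(q) = 0 with q not identically zero can be
   divided by q until its constant coefficient is nonzero. *)
Lemma coords_algebraic_coef0 Z s (sg : 'I_s -> 'I_r) q :
  zirreducible Z -> (exists2 z, Z z & evalp q z != 0) ->
  coords_algebraic Z sg q ->
  exists2 P : {poly {mpoly k[s]}}, P`_0 != 0 &
    forall z, Z z -> (map_poly (meval (sub_coords sg z)) P).[evalp q z] = 0.
Proof.
move=> [_ Zirr] [z1 Zz1 qz1] [P].
elim: {P}(size P) {-2}P (erefl (size P)) => [|d IH] P sP P0 HP.
  by move: P0; rewrite -size_poly_eq0 sP.
have [c0|] := eqVneq P`_0 0; last by exists P.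
have /factor_theorem [Q PQ] : root P 0 by rewrite /root horner_coef0 c0.
rewrite subr0 in PQ.
have Q0 : Q != 0 by apply: contraNneq P0 => Q0; rewrite PQ Q0 mul0r.
have HQ z : Z z ->
    (map_poly (meval (sub_coords sg z)) Q).[evalp q z] * evalp q z = 0.
  by move=> Zz; rewrite -(HP z Zz) PQ rmorphM /= map_polyX hornerMX.
pose Qq := (map_poly (subst_coords sg) Q).[q].
have cover z : Z z -> zero_set (eq^~ Qq) z \/ zero_set (eq^~ q) z.
  move=> Zz; have /eqP := HQ z Zz; rewrite mulf_eq0 => /orP[/eqP Qz|/eqP qz].
    by left => p ->; rewrite evalp_horner_subst.
  by right => p ->.
have [ZQ|Zq] := Zirr _ _ (zclosed_zero_set _) (zclosed_zero_set _) cover.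
  apply: (IH Q) => // [|z Zz]; first by move: sP; rewrite PQ size_mulX // => -[].
  by rewrite -evalp_horner_subst; apply: (ZQ z Zz).
by move: qz1; rewrite (Zq z1 Zz1 q erefl) eqxx.
Qed.

(* If every coordinate were algebraic over x_sg on Z', so would be an equation
   q of Z that does not vanish on Z'; a relation for q with nonzero constant
   term restricts on Z to a relation among the x_sg. *)
Lemma coords_indep_grow Z Z' s (sg : 'I_s -> 'I_r) :
  zclosed Z -> zirreducible Z' -> subset_of Z Z' -> ~ subset_of Z' Z ->
  coords_indep Z sg -> exists tau : 'I_s.+1 -> 'I_r, coords_indep Z' tau.
Proof.
move=> [S HS] Z'irr ZZ' /not_subset_of[z' [Z'z' /HS /not_zero_set[q [Sq qz']]]] indep.
have [[j nalg]|allalg] := pselect (exists j, ~ coords_algebraic Z' sg 'X_j).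
  exists (extend_coords sg j); apply: coords_indep_extend => //.
  exact: coords_indep_subset indep.
have algX j : coords_algebraic Z' sg 'X_j.
  by apply: contrapT => nalg; apply: allalg; exists j.
have [P P0 HP] := coords_algebraic_coef0 Z'irr (ex_intro2 _ _ z' Z'z' qz')
  (coords_algebraic_all (ex_intro _ z' Z'z') algX q).
case/eqP: P0; apply: indep => z Zz.
by have := HP z (ZZ' z Zz); rewrite (proj1 (HS z) Zz q Sq) horner_coef0 coef_map.
Qed.

Lemma no_chain_affine (A : pt k r -> Prop) : ~ has_chain A r.+1.
Proof.
move=> [Z [Zirr [Zlt _]]].
suff [sg /coords_indep_leq] : exists sg : 'I_r.+1 -> 'I_r, coords_indep (Z r.+1) sg.
  by rewrite ltnn.
elim: {-2}r.+1 (leqnn r.+1) => [|i IH] ir.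
  have [_ [[z Zz] _]] := Zirr 0%N isT.
  by exists (widen_ord (leq0n r)); apply: coords_indep0; exists z.
have [sg indep] := IH (ltnW ir).
have [[Zc _] [_ Zirr']] := (Zirr i (ltnW ir), Zirr i.+1 ir).
have [ZZ nZZ] := Zlt i ir.
exact: coords_indep_grow Zc Zirr' ZZ nZZ indep.
Qed.

End KrullUpperBound.

Section KrullLowerBound.
Variable k : closedFieldType.

Lemma zirreducible_polymap_image n m (P : 'I_m -> {mpoly k[n]}) (A : pt k m -> Prop) :
  (forall y, A y <-> exists x, y = polymap P x) -> zirreducible A.
Proof.
move=> AE; split; first by exists (polymap P 0); apply/AE; exists 0.
move=> W1 W2 [S1 HS1] [S2 HS2] cover.
have [|/not_subset_of[_ [/AE[x1 ->] /HS1 /not_zero_set[p1 [Sp1 p1x]]]]] :=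
  pselect (subset_of A W1); first by left.
have [|/not_subset_of[_ [/AE[x2 ->] /HS2 /not_zero_set[p2 [Sp2 p2x]]]]] :=
  pselect (subset_of A W2); first by right.
pose q i := (if i then p1 else p2) \mPo polytuple P.
have : q true * q false = 0.
  apply: vanishing_mpoly_eq0 => x; rewrite evalpM !evalp_comp.
  have [/HS1 W|/HS2 W] := cover _ (proj2 (AE _) (ex_intro _ x erefl)).
    by rewrite (W p1 Sp1) mul0r.
  by rewrite (W p2 Sp2) mulr0.
move/eqP; rewrite mulf_eq0 => /orP[/eqP q0|/eqP q0].
  by move: p1x; rewrite -evalp_comp [_ \mPo _]q0 evalp0 eqxx.
by move: p2x; rewrite -evalp_comp [_ \mPo _]q0 evalp0 eqxx.
Qed.

Variable r : nat.

Definition coord_subspace (i : nat) (x : pt k r) :=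
  forall j : 'I_r, (i <= j)%N -> x 0 j = 0.

Definition coord_trunc (i : nat) (j : 'I_r) : {mpoly k[r]} :=
  if (j < i)%N then 'X_j else 0.

Lemma coord_subspaceE i x :
  coord_subspace i x <-> exists y, x = polymap (coord_trunc i) y.
Proof.
split=> [x_i|[y ->] j ij]; last by rewrite /polymap mxE /coord_trunc ltnNge ij evalp0.
exists x; apply/rowP => j; rewrite /polymap mxE /coord_trunc.
by case: ltnP => ij; rewrite ?evalpXU // evalp0 x_i.
Qed.

Lemma zclosed_coord_subspace i : zclosed (coord_subspace i).
Proof.
exists (fun p => exists2 j : 'I_r, (i <= j)%N & p = 'X_j) => x; split.
  by move=> x_i p [j ij ->]; rewrite evalpXU x_i.
by move=> H j ij; rewrite -evalpXU; apply: H; exists j.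
Qed.

Lemma has_chain_affine : has_chain (fun _ : pt k r => True) r.
Proof.
exists coord_subspace; split; [|split] => //.
  move=> i _; split; first exact: zclosed_coord_subspace.
  exact: zirreducible_polymap_image (coord_subspaceE _).
move=> i ir; split=> [x x_i j ij|sub]; first by apply: x_i; apply: ltnW.
pose e : pt k r := \row_j (j == Ordinal ir)%:R.
have /sub/(_ (Ordinal ir) (leqnn _)) : coord_subspace i.+1 e.
  by move=> j ij; rewrite mxE; case: eqP => // ej; move: ij; rewrite ej ltnn.
by rewrite mxE eqxx => /eqP; rewrite oner_eq0.
Qed.

Lemma is_dim_affine : is_dim (fun _ : pt k r => True) r.
Proof. by split; [apply: has_chain_affine | apply: no_chain_affine]. Qed.

End KrullLowerBound.

Lemma is_dim_affine_iso (k : closedFieldType) n r (X : pt k n -> Prop)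
    (f : pt k n -> pt k r) (g : pt k r -> pt k n) :
  zclosed X -> is_morph X f -> is_morph (fun _ => True) g -> (forall y, X (g y)) ->
  (forall x, X x -> g (f x) = x) -> (forall y, f (g y) = y) -> is_dim X r.
Proof.
move=> Xc fm gm gX gf fg; have [chA nchA] := is_dim_affine k r; split.
  exact: (has_chain_transport Xc gm fm (fun y _ => gX y) (fun _ _ => I)
    (fun y _ => fg y) gf chA).
by move=> /(has_chain_transport (zclosedT _ _) fm gm (fun _ _ => I) (fun y _ => gX y) gf
  (fun y _ => fg y)).
Qed.

Section LinearAlgebra.
Variable F : fieldType.

Definition lin_closed m (S : 'rV[F]_m -> Prop) :=
  S 0 /\ forall a u v, S u -> S v -> S (a *: u + v).

Lemma lin_closed_mulmx m (S : 'rV[F]_m -> Prop) p (M : 'M_(p, m)) :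
  lin_closed S -> (forall i, S (row i M)) -> forall c : 'rV_p, S (c *m M).
Proof.
move=> [S0 SD] SM c; rewrite mulmx_sum_row.
apply: (big_ind S) => // [u v Su Sv|i _]; first by rewrite -[u]scale1r; apply: SD.
by rewrite -[_ *: _]addr0; apply: SD.
Qed.

Lemma lin_closed_rowspace m (S : 'rV[F]_m -> Prop) : lin_closed S ->
  exists r (B : 'M[F]_(r, m)),
    [/\ row_free B, forall i, S (row i B) & forall v, S v <-> (v <= B)%MS].
Proof.
move=> linS.
have span_sub p (B : 'M_(p, m)) v : (forall i, S (row i B)) -> (v <= B)%MS -> S v.
  by move=> SB /submxP[c ->]; apply: lin_closed_mulmx.
pose spans (d : nat) :=
  exists p (B : 'M_(p, m)), (forall i, S (row i B)) /\ \rank B = d.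
have spans0 : `[< spans 0%N >].
  by apply/asboolP; exists 0%N, 0; rewrite mxrank0; split=> // -[].
have spans_le (d : nat) : `[< spans d >] -> (d <= m)%N.
  by move=> /asboolP[p [B [_ <-]]]; apply: rank_leq_col.
case: (ex_maxnP (ex_intro (fun d => `[< spans d >]) _ spans0) spans_le).
move=> d /asboolP[p [B [SB <-]]] maxB.
exists (\rank B), (row_base B); split; first exact: row_base_free.
  by move=> i; apply: span_sub SB _; rewrite (submx_trans (row_sub i _)) // eq_row_base.
move=> v; rewrite eq_row_base; split=> [Sv|]; last exact: span_sub.
apply: contraT => vB; have ltB : (B < col_mx B v)%MS.
  by rewrite ltmxE col_mx_sub submx_refl (negbTE vB) -addsmxE addsmxSl.
have /maxB : `[< spans (\rank (col_mx B v)) >].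
  apply/asboolP; exists (p + 1)%N, (col_mx B v); split=> // i.
  case: (splitP i) => j ij.
    by rewrite (_ : i = lshift 1 j) ?rowKu //; apply: val_inj.
  rewrite (_ : i = rshift p j) ?rowKd; last exact: val_inj.
  by rewrite (_ : row j v = v) //; apply/rowP => l; rewrite !mxE ord1.
by rewrite leqNgt rank_ltmx.
Qed.

Lemma det_mulmx_neq0_submx r m (A B : 'M[F]_(r, m)) (C : 'M_(m, r)) :
  (A <= B)%MS -> \det (A *m C) != 0 -> (B <= A)%MS.
Proof.
move=> AB detAC; have /mxrank_unit rkAC : A *m C \in unitmx by rewrite unitmxE unitfE.
rewrite -(mxrank_leqif_sup AB).2 eqn_leq mxrankS //=.
by apply: leq_trans (rank_leq_row B) _; rewrite -{1}rkAC mxrankM_maxl.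
Qed.

End LinearAlgebra.

Section PolynomialMatrices.
Variable k : closedFieldType.

Lemma zclosed_mulmx_eq0 m p (M : 'M[k]_(m, p)) : zclosed (fun v : pt k m => v *m M = 0).
Proof.
exists (fun q => exists j, q = \sum_l M l j *: 'X_l) => v.
rewrite -{1}(polymap_coords v) polymap_mulmx; split.
  move=> v0 q [j ->].
  by have := congr1 (fun w : 'rV_p => w 0 j) v0; rewrite /polymap !mxE.
by move=> H; apply/rowP => j; rewrite /polymap !mxE; apply: H; exists j.
Qed.

Lemma det_polynomial n r (X : pt k n -> Prop) (A : pt k n -> 'M[k]_r) :
  (forall i j, exists p : {mpoly k[n]}, forall y, X y -> A y i j = evalp p y) ->
  exists D : {mpoly k[n]}, forall y, X y -> evalp D y = \det (A y).
Proof.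
move=> Apoly; have [P HP] : {P : 'I_r * 'I_r -> {mpoly k[n]} &
    forall ij, forall y, X y -> A y ij.1 ij.2 = evalp (P ij) y}.
  by apply: (@choice _ _ (fun ij p => forall y, X y -> A y ij.1 ij.2 = evalp p y))
    => -[i j].
exists (\det (\matrix_(i, j) P (i, j))) => y Xy; rewrite /evalp -det_map_mx.
by congr (\det _); apply/matrixP => i j; rewrite !mxE (HP (i, j)).
Qed.

End PolynomialMatrices.

Section LinearSemigroup.
Variables (k : closedFieldType) (n : nat).
Variables (X : pt k n -> Prop) (E : (pt k n -> pt k n) -> Prop).
Hypotheses (X_closed : zclosed X) (X_irr : zirreducible X).
Variables (m : nat) (iota : pt k n -> pt k m) (I : 'I_m -> {mpoly k[n]})
  (Q : 'I_n -> {mpoly k[m]}).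
Hypotheses (E_endo : forall f, E f -> is_endo X f)
  (E_id : exists f, E f /\ forall x, X x -> f x = x)
  (iotaE : forall x, X x -> iota x = polymap I x)
  (iotaK : forall x, X x -> polymap Q (iota x) = x)
  (E_lin : forall (f g : pt k n -> pt k n) (a : k), E f -> E g ->
      exists h, E h /\ forall x, X x -> iota (h x) = a *: iota (f x) + iota (g x)).

Definition orbit_image x (v : pt k m) := exists f, E f /\ v = iota (f x).

Lemma lin_closed_orbit_image x : X x -> lin_closed (orbit_image x).
Proof.
move=> Xx; split=> [|a u v [f [Ef ->]] [g [Eg ->]]].
  have [f [Ef _]] := E_id; have [h [Eh hE]] := E_lin (-1) Ef Ef.
  by exists h; split=> //; rewrite hE // scaleN1r addNr.
by have [h [Eh hE]] := E_lin a Ef Eg; exists h; split=> //; rewrite hE.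
Qed.

Lemma orbit_sub x y : X x -> Eorbit E x y -> X y.
Proof. by move=> Xx [f [Ef ->]]; apply: (E_endo Ef).2. Qed.

Lemma orbit_imageP x y : X x -> X y -> orbit_image x (iota y) <-> Eorbit E x y.
Proof.
move=> Xx Xy; split=> -[f [Ef fx]]; exists f; split=> //; last by rewrite fx.
by rewrite -(iotaK Xy) fx iotaK //; apply: (E_endo Ef).2.
Qed.

Lemma orbit_image_iota x y : X x -> Eorbit E x y -> orbit_image x (iota y).
Proof. by move=> Xx Exy; apply/orbit_imageP => //; apply: orbit_sub Exy. Qed.

Lemma iota_endo_morph f : E f -> exists P, forall y, X y -> iota (f y) = polymap P y.
Proof.
move=> /E_endo[[P fE] fX]; exists (fun l => I l \mPo polytuple P) => y Xy.
by rewrite -polymap_comp -fE // -iotaE //; apply: fX.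
Qed.

Lemma dense_orbit_full x : X x -> dense_in (Eorbit E x) X ->
  forall y, Eorbit E x y <-> X y.
Proof.
move=> Xx dense.
have [r [B [_ _ SB]]] := lin_closed_rowspace (lin_closed_orbit_image Xx).
pose C y := X y /\ iota y *m cokermx B = 0.
have Cc : zclosed C.
  apply: (@zclosed_ext _ _ (fun y => X y /\ polymap I y *m cokermx B = 0)).
    by move=> y; split=> -[Xy yB]; split; rewrite // ?iotaE // -iotaE.
  exact/zclosedI/(zclosed_preimage I (zclosed_mulmx_eq0 _)).
have orbitC : subset_of (Eorbit E x) C.
  move=> y Exy; split; first exact: orbit_sub Exy.
  by apply/eqP; rewrite -submxE; apply/SB/orbit_image_iota.
move=> y; split=> [|Xy]; first exact: orbit_sub.
have [_ /eqP] := zclosure_min Cc orbitC (dense y Xy).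
by rewrite -submxE => /SB /orbit_imageP; apply.
Qed.

Lemma full_orbit_affine x : X x -> (forall y, Eorbit E x y <-> X y) ->
  exists (r : nat) (f : pt k n -> pt k r) (g : pt k r -> pt k n),
    [/\ is_morph X f, is_morph (fun _ => True) g, forall y, X (g y),
        forall x, X x -> g (f x) = x & forall y, f (g y) = y].
Proof.
move=> Xx full.
have [r [B [Bfree _ SB]]] := lin_closed_rowspace (lin_closed_orbit_image Xx).
pose f y := iota y *m pinvmx B; pose g c := polymap Q (c *m B).
have iotaX c : exists2 y, X y & iota y = c *m B.
  have [h [Eh ->]] : orbit_image x (c *m B) by apply/SB/submxMl.
  by exists (h x) => //; apply: (E_endo Eh).2.
have gE c y : X y -> iota y = c *m B -> g c = y by move=> Xy yc; rewrite /g -yc iotaK.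
exists r, f, g; split.
- exists (fun j => \sum_l pinvmx B l j *: I l) => y Xy.
  by rewrite /f iotaE // polymap_mulmx.
- exists (fun i => Q i \mPo polytuple (fun j => \sum_l B l j *: 'X_l)) => c _.
  by rewrite /g -polymap_comp -polymap_mulmx polymap_coords.
- by move=> c; have [y Xy yc] := iotaX c; rewrite (gE c y Xy yc).
- move=> y Xy; apply: gE => //; rewrite /f mulmxKpV //.
  by apply/SB/orbit_image_iota/full.
- by move=> c; have [y Xy yc] := iotaX c; rewrite (gE c y Xy yc) /f yc mulmxKp.
Qed.

Definition frame r (F : 'I_r -> pt k n -> pt k n) y : 'M[k]_(r, m) :=
  \matrix_(i, l) iota (F i y) 0 l.

Lemma row_frame r (F : 'I_r -> pt k n -> pt k n) y i : row i (frame F y) = iota (F i y).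
Proof. by apply/rowP => l; rewrite !mxE. Qed.

Lemma det_frame_polynomial r (F : 'I_r -> pt k n -> pt k n) (C : 'M_(m, r)) :
  (forall i, E (F i)) ->
  exists D : {mpoly k[n]}, forall y, X y -> evalp D y = \det (frame F y *m C).
Proof.
move=> EF; apply: det_polynomial => i j; have [P PE] := iota_endo_morph (EF i).
exists (\sum_l C l j *: P l) => y Xy.
have -> : (frame F y *m C) i j = row i (frame F y *m C) 0 j by rewrite [RHS]mxE.
by rewrite row_mul row_frame PE // polymap_mulmx mxE.
Qed.

(* The frame at y lies in iota(X), the row space of B; a nonzero determinant
   makes it span iota(X), and its rows lie in the linear space iota(E y). *)
Lemma frame_full_orbit x r (B : 'M_(r, m)) (F : 'I_r -> pt k n -> pt k n) C y :
  X x -> (forall y, Eorbit E x y <-> X y) ->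
  (forall v, orbit_image x v <-> (v <= B)%MS) ->
  (forall i, E (F i)) -> X y -> \det (frame F y *m C) != 0 ->
  forall w, Eorbit E y w <-> X w.
Proof.
move=> Xx full SB EF Xy detFy w; split=> [|Xw]; first exact: orbit_sub.
have FB : (frame F y <= B)%MS.
  apply/row_subP => i; rewrite row_frame; apply/SB/orbit_image_iota/full => //.
  exact: (E_endo (EF i)).2.
have wF : (iota w <= frame F y)%MS.
  apply: submx_trans (det_mulmx_neq0_submx FB detFy).
  by apply/SB/orbit_image_iota/full.
apply/orbit_imageP => //; rewrite -(mulmxKpV wF).
apply: lin_closed_mulmx (lin_closed_orbit_image Xy) _ _ => i.
by rewrite row_frame; exists (F i).
Qed.

Lemma full_orbit_generic x : X x -> (forall y, Eorbit E x y <-> X y) ->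
  exists Z : pt k n -> Prop, zclosed Z /\
        dense_in (fun x => X x /\ ~ Z x) X /\
        forall x, X x -> ~ Z x -> forall y, Eorbit E x y <-> X y.
Proof.
move=> Xx full.
have [r [B [Bfree SB_rows SB]]] := lin_closed_rowspace (lin_closed_orbit_image Xx).
have [F FE] : {F : 'I_r -> pt k n -> pt k n &
    forall i, E (F i) /\ row i B = iota (F i x)}.
  apply: (@choice _ _ (fun i f => E f /\ row i B = iota (f x))) => i.
  by have [f [Ef fx]] := SB_rows i; exists f.
have EF i : E (F i) by case: (FE i).
have [D DE] := det_frame_polynomial (pinvmx B) EF.
have FxB : frame F x = B by apply/row_matrixP => i; rewrite row_frame -(FE i).2.
exists (zero_set (eq^~ D)); split; first exact: zclosed_zero_set.
split.
  apply: zirreducible_compl_dense => //; first exact: zclosed_zero_set.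
  exists x; split=> // /(_ D erefl) /eqP.
  by rewrite DE // FxB mulmxVp // det1 oner_eq0.
move=> y Xy nZy; apply: (frame_full_orbit (C := pinvmx B) Xx full SB EF Xy).
by rewrite -DE //; apply/eqP => D0; apply: nZy => p ->.
Qed.

Lemma generic_full_orbit (Z : pt k n -> Prop) :
  dense_in (fun x => X x /\ ~ Z x) X ->
  (forall x, X x -> ~ Z x -> forall y, Eorbit E x y <-> X y) ->
  exists x, X x /\ forall y, Eorbit E x y <-> X y.
Proof.
move=> dense full; have [x0 Xx0] := X_irr.1.
have [y [Xy nZy]] : exists y, X y /\ ~ Z y.
  apply: contrapT => none; suff /eqP : (1 : k) = 0 by rewrite oner_eq0.
  by rewrite -(evalp1 x0); apply: (dense x0 Xx0) => y Hy; elim: none; exists y.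
by exists y; split=> //; apply: full.
Qed.

Lemma dim_dense_orbit d : is_dX X E d -> is_dim X d ->
  exists x, X x /\ dense_in (Eorbit E x) X.
Proof.
move=> [[x [Xx [chx _]]] _] [_ nchX]; exists x; split=> //.
have orbitX : subset_of (zclosure (Eorbit E x)) X.
  by apply: zclosure_min => // y; apply: orbit_sub.
by apply: contrapT => nd; apply: nchX; apply: has_chain_extend chx.
Qed.

Lemma dense_orbit_dim x : X x -> dense_in (Eorbit E x) X ->
  exists d, is_dX X E d /\ is_dim X d.
Proof.
move=> Xx dense; have full := dense_orbit_full Xx dense.
have [r [f [g [fm gm gX gf fg]]]] := full_orbit_affine Xx full.
have dimX := is_dim_affine_iso X_closed fm gm gX gf fg.
have orbitX y : X y -> subset_of (zclosure (Eorbit E y)) X.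
  by move=> Xy; apply: zclosure_min => // z; apply: orbit_sub.
exists r; split=> //; split.
  exists x; split=> //; apply: is_dim_ext dimX => y.
  by split=> [/dense|/(orbitX x Xx)].
move=> y e Xy [che _]; rewrite leqNgt; apply/negP => lt_re.
by apply: dimX.2; apply: has_chain_leq lt_re; apply: has_chain_subset (orbitX y Xy) che.
Qed.

End LinearSemigroup.

Unset Implicit Arguments.
Set Strict Implicit.

Theorem lemma4p5p1 (k : closedFieldType) (k_char0 : [pchar k] =i pred0)
    (n : nat) (X : pt k n -> Prop) (E : (pt k n -> pt k n) -> Prop)
    (X_closed : zclosed X) (X_irr : zirreducible X)
    (E_lin : linear_semigroup X E) :
  let cond_i := exists x, X x /\ dense_in (Eorbit E x) X in
  let cond_ii := exists d, is_dX X E d /\ is_dim X d in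
  let cond_iii := exists x, X x /\ forall y, Eorbit E x y <-> X y in
  let cond_iv := exists Z : pt k n -> Prop, zclosed Z /\
        dense_in (fun x => X x /\ ~ Z x) X /\
        forall x, X x -> ~ Z x -> forall y, Eorbit E x y <-> X y in
  [/\ cond_i <-> cond_ii, cond_i <-> cond_iii, cond_i <-> cond_iv &
      (cond_i ->
       exists (m : nat) (f : pt k n -> pt k m) (g : pt k m -> pt k n),
         [/\ is_morph X f, is_morph (fun _ => True) g,
             forall y, X (g y),
             forall x, X x -> g (f x) = x &
             forall y, f (g y) = y])].
Proof.
move=> cond_i cond_ii cond_iii cond_iv.
have [[E_endo [E_id _]] [m [iota [[[I iotaE] [_ [Q iotaK]]] E_add]]]] := E_lin.
have i_iii : cond_i -> cond_iii.
  move=> [x [Xx dense]]; exists x; split=> //.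
  exact: (dense_orbit_full X_closed E_endo E_id iotaE iotaK E_add Xx dense).
have iii_i : cond_iii -> cond_i.
  by move=> [x [Xx full]]; exists x; split=> // y /full; apply: sub_zclosure.
have iii_iv : cond_iii -> cond_iv.
  move=> [x [Xx full]].
  exact: (full_orbit_generic X_irr E_endo E_id iotaE iotaK E_add Xx full).
have iv_iii : cond_iv -> cond_iii.
  by move=> [Z [_ [dense full]]]; exact: (generic_full_orbit X_irr dense full).
split.
- split=> [[x [Xx dense]]|[d [dX dimX]]].
    exact: (dense_orbit_dim X_closed E_endo E_id iotaE iotaK E_add Xx dense).
  exact: (dim_dense_orbit X_closed X_irr E_endo dX dimX).
- by split.
- by split=> [/i_iii/iii_iv|/iv_iii/iii_i].
- move=> /i_iii[x [Xx full]].
  exact: (full_orbit_affine E_endo E_id iotaE iotaK E_add Xx full).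
Qed.
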